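(* For each $t\in\Bbbk$ there is a unique automorphism $\sigma_t$ of $A$ with $\sigma_t(x)=x$ and $\sigma_t(y)=y+tx^{N-1}$, and it is central in $\mathrm{Aut}(A)$. The map $t\in\Bbbk\mapsto\sigma_t\in\mathrm{Aut}(A)$ is an injective group homomorphism from the additive group of $\Bbbk$ whose image is exactly the center of $\mathrm{Aut}(A)$.
   Context: Let $\Bbbk$ be a field of characteristic zero and $N\geq1$ an integer. Let $A=A_N$ be the $\Bbbk$-algebra generated by $x,y$ subject to the relation $yx-xy=x^N$, and $\mathrm{Aut}(A)$ its group of algebra automorphisms. *)

From HB Require Import structures.
From mathcomp Require Import all_boot all_order all_algebra.
Set Implicit Arguments. Unset Strict Implicit. Unset Printing Implicit Defensive.
Import GRing.Theory.
Local Open Scope ring_scope.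

Definition is_alg_hom (K : fieldType) (A B : algType K) (f : A -> B) : Prop :=
  (forall a b, f (a + b) = f a + f b) /\
  (forall a b, f (a * b) = f a * f b) /\
  f 1 = 1 /\
  (forall (c : K) a, f (c *: a) = c *: f a).

Definition is_alg_aut (K : fieldType) (A : algType K) (f : A -> A) : Prop :=
  is_alg_hom f /\ bijective f.

(* (A, x, y) is a presentation of the K-algebra generated by x, y subject to
   the single relation  y x - x y = x^N  (universal property of the quotient
   of the free algebra K<x,y> by the two-sided ideal generated by the relation). *)
Definition presents_AN (K : fieldType) (N : nat) (A : algType K) (x y : A) : Prop :=
  y * x - x * y = x ^+ N /\
  forall (B : algType K) (a b : B), b * a - a * b = a ^+ N ->
    exists f : A -> B,
      [/\ is_alg_hom f, f x = a, f y = b &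
          forall g : A -> B, is_alg_hom g -> g x = a -> g y = b -> g =1 f].

From HB Require Import structures.
From mathcomp Require Import all_boot all_order all_algebra.
From mathcomp Require Import ring zify.
From Stdlib Require Import ClassicalEpsilon.
Set Implicit Arguments. Unset Strict Implicit. Unset Printing Implicit Defensive.
Import GRing.Theory.
Local Open Scope ring_scope.

(* Every element of [A] has a unique normal form [\sum_j p_j(x) y^j]. It exists because
   the normal forms make up a subalgebra containing [x] and [y]; it is unique because
   commuting with [x] lowers the [y]-degree (characteristic 0) and [K[x]] has faithful
   matrix representations [x |-> shift]. Reading off degrees and leading coefficients,
   the centralizer of [x] is [K[x]], units are scalars, and all commutators lie in [x^N A].
   An automorphism [f] preserves that ideal, which forces [f x = d x] and then
   [f y = d^(N-1) y + q(x)]; all such maps commute with [sigma_t : y |-> y + t x^(N-1)].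
   Conversely a central automorphism commutes with every [y |-> y + q(x)] and with the
   scaling [x |-> 2 x, y |-> 2^(N-1) y], which pins it down to some [sigma_t]. *)

Section AlgHom.
Variables (K : fieldType) (A B : algType K) (f : A -> B).
Hypothesis hf : is_alg_hom f.

Lemma alg_homD a b : f (a + b) = f a + f b. Proof. by case: hf. Qed.
Lemma alg_homM a b : f (a * b) = f a * f b. Proof. by case: hf => _ []. Qed.
Lemma alg_hom1 : f 1 = 1. Proof. by case: hf => _ [_ []]. Qed.
Lemma alg_homZ c a : f (c *: a) = c *: f a. Proof. by case: hf => _ [_ [_]]. Qed.

Lemma alg_hom0 : f 0 = 0.
Proof. by rewrite -(scale0r (0 : A)) alg_homZ scale0r. Qed.

Lemma alg_homN a : f (- a) = - f a.
Proof. by rewrite -scaleN1r alg_homZ scaleN1r. Qed.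

Lemma alg_homB a b : f (a - b) = f a - f b.
Proof. by rewrite alg_homD alg_homN. Qed.

Lemma alg_homX a n : f (a ^+ n) = f a ^+ n.
Proof. by elim: n => [|n IH]; rewrite ?alg_hom1 // !exprS alg_homM IH. Qed.

Lemma alg_hom_horner a p : f (horner_alg a p) = horner_alg (f a) p.
Proof.
elim/poly_ind: p => [|p c IH]; first by rewrite !rmorph0 alg_hom0.
by rewrite !rmorphD !rmorphM /= !horner_algX !horner_algC alg_homD alg_homM IH alg_homZ alg_hom1.
Qed.

End AlgHom.

Lemma alg_hom_id (K : fieldType) (A : algType K) : is_alg_hom (@id A).
Proof. by []. Qed.

Lemma alg_hom_comp (K : fieldType) (A B C : algType K) (f : A -> B) (g : B -> C) :
  is_alg_hom f -> is_alg_hom g -> is_alg_hom (g \o f).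
Proof.
move=> hf hg; split=> [a b|]; first by rewrite /= (alg_homD hf) (alg_homD hg).
split=> [a b|]; first by rewrite /= (alg_homM hf) (alg_homM hg).
by split=> [|c a]; rewrite /= ?(alg_hom1 hf) ?(alg_hom1 hg) ?(alg_homZ hf) ?(alg_homZ hg).
Qed.

Lemma alg_hom_can (K : fieldType) (A B : algType K) (f : A -> B) (g : B -> A) :
  is_alg_hom f -> cancel f g -> cancel g f -> is_alg_hom g.
Proof.
move=> hf fK gK; have fI := can_inj fK.
split=> [a b|]; first by apply: fI; rewrite (alg_homD hf) !gK.
split=> [a b|]; first by apply: fI; rewrite (alg_homM hf) !gK.
by split=> [|c a]; apply: fI; rewrite ?(alg_hom1 hf) ?(alg_homZ hf) !gK.
Qed.

Lemma horner_alg_is_alg_hom (K : fieldType) (A : algType K) (a : A) :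
  is_alg_hom (horner_alg a).
Proof.
split=> [p q|]; first exact: rmorphD.
split=> [p q|]; first exact: rmorphM.
by split=> [|c p]; rewrite ?rmorph1 // -mul_polyC rmorphM /= horner_algC mulr_algl.
Qed.

Lemma horner_alg_comm (K : fieldType) (A : algType K) (a : A) p :
  horner_alg a p * a = a * horner_alg a p.
Proof.
by rewrite -[X in _ * X = _](horner_algX a) -[X in _ = X * _](horner_algX a) -!rmorphM /= mulrC.
Qed.

Lemma horner_alg_scaleXn (K : fieldType) (A : algType K) (a : A) (c : K) k :
  horner_alg a (c *: 'X^k) = c *: a ^+ k.
Proof. by rewrite (alg_homZ (horner_alg_is_alg_hom a)) rmorphXn /= horner_algX. Qed.

Lemma expn_eq_scaleXn (K : fieldType) (N : nat) (p : {poly K}) (c : K) :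
  (0 < N)%N -> c != 0 -> p ^+ N = c *: 'X^N -> exists d : K, p = d *: 'X.
Proof.
move=> HN c0 e.
have p0 : p != 0.
  apply: contra_eqN e => /eqP ->; rewrite expr0n gtn_eqF //= eq_sym scaler_eq0 negb_or c0.
  by rewrite monic_neq0 ?monicXn.
have sp : size p = 2%N.
  have := size_exp p N; rewrite e size_scale // size_polyXn /= => h.
  have : (size p).-1 = 1%N by apply/eqP; rewrite -(eqn_pmul2r HN) mul1n -h.
  by move: p0; rewrite -size_poly_gt0; case: (size p) => [|[|k]] //= _ ->.
have p00 : p`_0 = 0.
  have := congr1 (fun q => q.[0]) e; rewrite /= horner_exp hornerZ hornerXn.
  by rewrite expr0n gtn_eqF //= mulr0 => /eqP; rewrite expf_eq0 HN horner_coef0 => /eqP.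
exists p`_1; apply/polyP => -[|[|i]]; rewrite coefZ coefX ?p00 ?mulr0 ?mulr1 //.
by rewrite nth_default // sp.
Qed.

Lemma coef_horner_scaleX (K : fieldType) (c : K) (p : {poly K}) i :
  (horner_alg (c *: 'X) p)`_i = c ^+ i * p`_i.
Proof.
elim/poly_ind: p i => [|p a IH] i; first by rewrite rmorph0 coef0 mulr0.
rewrite rmorphD rmorphM /= horner_algX horner_algC alg_polyC -scalerAr !coefD !coefC coefZ !coefMX.
by case: i => [|i] /=; rewrite ?mulr0 ?add0r ?expr0 ?mul1r // IH !addr0 mulrA -exprS.
Qed.

Lemma natr_inj_pchar0 (K : fieldType) : [pchar K] =i pred0 -> injective (GRing.natmul (1 : K)).
Proof.
move=> charK0 m n; wlog mn : m n / (m <= n)%N => [hw e|e].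
  by case: (leqP m n) => h; [exact: hw | apply/esym/hw => //; apply: ltnW].
have : (n - m)%:R = 0 :> K by rewrite natrB // e subrr.
by move/eqP; rewrite (pcharf0P _).1 // subn_eq0 => nm; apply/eqP; rewrite eqn_leq mn.
Qed.

Lemma horner_scale2X_homog (K : fieldType) (p : {poly K}) m : [pchar K] =i pred0 ->
  horner_alg (2 *: 'X) p = 2 ^+ m *: p -> p = p`_m *: 'X^m.
Proof.
move=> charK0 e; apply/polyP => i; rewrite coefZ coefXn.
have [->|im] := eqVneq i m; first by rewrite mulr1.
have /eqP := congr1 (fun q : {poly K} => q`_i) e; rewrite /= coef_horner_scaleX coefZ mulr0.
rewrite -subr_eq0 -mulrBl mulf_eq0 subr_eq0 -!natrX => /orP[/eqP/natr_inj_pchar0|/eqP] //.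
by move/(_ charK0)/eqP; rewrite eqn_exp2l // (negbTE im).
Qed.

(** * Normal forms in [K[X][Y]] *)

(* [ore_mulY], [ore_mul] and [commYnX j] are the normal forms of left multiplication by [y],
   of the product, and of [y^j x - x y^j] (see [eval_xy_mulY], [eval_xy_mul] and
   [eval_xy_commYnX]). *)
Section OrePoly.
Variables (K : fieldType) (N : nat).
Implicit Types (P Q R : {poly {poly K}}).

Definition ore_mulY R : {poly {poly K}} :=
  'X * R + ('X^N)%:P * \poly_(j < size R) (R`_j)^`().

Definition ore_mul P Q : {poly {poly K}} :=
  \sum_(j < size P) (P`_j)%:P * iter j ore_mulY Q.

Lemma coef_ore_mulY R j :
  (ore_mulY R)`_j = (if j == 0%N then 0 else R`_j.-1) + 'X^N * (R`_j)^`().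
Proof.
rewrite coefD coefXM coefCM coef_poly; congr (_ + _).
by case: ltnP => // hj; rewrite ?mulr0 // nth_default // deriv0 mulr0.
Qed.

Lemma size_ore_mulY_leq R : (size (ore_mulY R) <= (size R).+1)%N.
Proof.
apply: leq_trans (size_polyD _ _) _; rewrite geq_max; apply/andP; split.
  by apply: leq_trans (size_polyMleq _ _) _; rewrite size_polyX.
rewrite mul_polyC; apply: leq_trans (size_scale_leq _ _) _.
exact: leq_trans (size_poly _ _) _.
Qed.

Lemma ore_mulY_lead R : R != 0 ->
  size (ore_mulY R) = (size R).+1 /\ lead_coef (ore_mulY R) = lead_coef R.
Proof.
move=> hR; have hX : size ('X * R) = (size R).+1 by rewrite mulrC size_mulX.
have hl : (size (('X^N)%:P * \poly_(j < size R) (R`_j)^`())%R < size ('X * R)%R)%N.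
  by rewrite hX ltnS mul_polyC (leq_trans (size_scale_leq _ _)) ?size_poly.
by rewrite /ore_mulY (size_polyDl hl) (lead_coefDl hl) hX mulrC lead_coefMX.
Qed.

Lemma iter_ore_mulY_lead j R : R != 0 ->
  size (iter j ore_mulY R) = (size R + j)%N /\
  lead_coef (iter j ore_mulY R) = lead_coef R.
Proof.
move=> hR; elim: j => [|j [IHs IHl]]; first by rewrite addn0.
have hj : iter j ore_mulY R != 0 by rewrite -size_poly_gt0 IHs addn_gt0 size_poly_gt0 hR.
by have [s l] := ore_mulY_lead hj; rewrite /= s l IHs IHl addnS.
Qed.

Lemma ore_mul_lead P Q : P != 0 -> Q != 0 ->
  size (ore_mul P Q) = (size P + size Q).-1 /\
  lead_coef (ore_mul P Q) = lead_coef P * lead_coef Q.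
Proof.
move=> hP hQ; have [n hn] : exists n, size P = n.+1.
  by exists (size P).-1; rewrite prednK // size_poly_gt0.
have hPn : P`_n != 0 by rewrite -[n]/(n.+1.-1) -hn -lead_coefE lead_coef_eq0.
have [s l] := iter_ore_mulY_lead n hQ.
have hT : size ((P`_n)%:P * iter n ore_mulY Q) = (size Q + n)%N by rewrite size_Cmul // s.
have hlow : (size (\sum_(j < n) (P`_j)%:P * iter j ore_mulY Q)%R < size Q + n)%N.
  apply: (big_ind (fun Q' => size Q' < size Q + n)%N).
  - by rewrite size_poly0 addn_gt0 size_poly_gt0 hQ.
  - by move=> Q1 Q2 h1 h2; apply: leq_ltn_trans (size_polyD _ _) _; rewrite gtn_max h1 h2.
  - move=> j _; rewrite mul_polyC; apply: leq_ltn_trans (size_scale_leq _ _) _.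
    by have [-> _] := iter_ore_mulY_lead j hQ; rewrite ltn_add2l.
rewrite -hT in hlow; rewrite /ore_mul hn big_ord_recr /= addrC.
rewrite (size_polyDl hlow) (lead_coefDl hlow) hT lead_coefM lead_coefC l.
by rewrite addnC (lead_coefE P) hn.
Qed.

Lemma iter_ore_mulY_modXN j Q : exists R, iter j ore_mulY Q = 'X^j * Q + ('X^N)%:P * R.
Proof.
elim: j => [|j [R IH]]; first by exists 0; rewrite expr0 mul1r mulr0 addr0.
set D := \poly_(i < size (iter j ore_mulY Q)) ((iter j ore_mulY Q)`_i)^`().
by exists ('X * R + D); rewrite /= /ore_mulY -/D IH exprS; ring.
Qed.

Lemma ore_mul_modXN P Q : exists R, ore_mul P Q = P * Q + ('X^N)%:P * R.
Proof.
suff sum_modXN n : exists R, \sum_(j < n) (P`_j)%:P * iter j ore_mulY Q =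
    (\sum_(j < n) (P`_j)%:P * 'X^j) * Q + ('X^N)%:P * R.
  rewrite /ore_mul; have [R ->] := sum_modXN (size P); exists R; congr (_ * _ + _).
  by rewrite -[RHS]coefK poly_def; apply: eq_bigr => j _; rewrite mul_polyC.
elim: n => [|n [R IH]]; first by exists 0; rewrite !big_ord0 mul0r mulr0 addr0.
have [S hS] := iter_ore_mulY_modXN n Q.
by exists (R + (P`_n)%:P * S); rewrite !big_ord_recr /= IH hS; ring.
Qed.

Fixpoint commYnX j : {poly {poly K}} :=
  if j is i.+1 then ore_mulY (commYnX i) + ('X^N)%:P * 'X^i else 0.

Definition ore_commX P : {poly {poly K}} := \sum_(j < size P) (P`_j)%:P * commYnX j.

Lemma size_commYnX j : (size (commYnX j) <= j)%N.
Proof.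
elim: j => [|j IH] /=; first by rewrite size_poly0.
apply: leq_trans (size_polyD _ _) _; rewrite geq_max (leq_trans (size_ore_mulY_leq _)) //.
by rewrite mul_polyC (leq_trans (size_scale_leq _ _)) ?size_polyXn.
Qed.

Lemma coef_commYnX j : (commYnX j.+1)`_j = 'X^N *+ j.+1.
Proof.
elim: j => [|j IH].
  by rewrite /= coefD coef_ore_mulY !coef0 deriv0 mulr0 !add0r coefCM coefXn mulr1.
rewrite [commYnX _]/= coefD coef_ore_mulY IH coefCM coefXn eqxx mulr1.
by rewrite [_`_j.+1]nth_default ?deriv0 ?mulr0 ?addr0 -?mulrSr // (size_commYnX j.+1).
Qed.

Lemma size_ore_commX P : (size (ore_commX P) <= (size P).-1)%N.
Proof.
apply: (big_ind (fun Q => size Q <= (size P).-1)%N); first by rewrite size_poly0.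
  by move=> Q1 Q2 h1 h2; apply: leq_trans (size_polyD _ _) _; rewrite geq_max h1 h2.
move=> j _; rewrite mul_polyC (leq_trans (size_scale_leq _ _)) //.
by rewrite (leq_trans (size_commYnX _)) // -ltnS prednK // (leq_ltn_trans _ (ltn_ord j)).
Qed.

Hypothesis charK0 : [pchar K] =i pred0.

(* The coefficient of [Y^(n-2)] in [ore_commX P] is [(n-1) X^N lead_coef P], for [n = size P]. *)
Lemma ore_commX_neq0 P : (1 < size P)%N -> ore_commX P != 0.
Proof.
move=> hs; have [n hn] : exists n, size P = n.+2 by exists (size P).-2; case: (size P) hs => [|[|]].
apply/eqP => /(congr1 (fun Q : {poly {poly K}} => Q`_n)); rewrite coef0 /ore_commX coef_sum.
have hlc : P`_n.+1 != 0.
  by rewrite -[n.+1]/(n.+2.-1) -hn -lead_coefE lead_coef_eq0 -size_poly_gt0 hn.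
have hXN : 'X^N != 0 :> {poly K} by rewrite monic_neq0 ?monicXn.
rewrite hn big_ord_recr big1 => [|j _]; last first.
  by rewrite coefCM [_`_n]nth_default ?mulr0 // (leq_trans (size_commYnX j)) // -ltnS.
rewrite Monoid.mul1m coefCM coef_commYnX -mulr_natr => /eqP.
by rewrite !mulf_eq0 -polyC_natr polyC_eq0 (pcharf0P _).1 // (negbTE hlc) (negbTE hXN).
Qed.

End OrePoly.

Section EvalXY.
Variables (K : fieldType) (A : algType K) (x y : A).
Implicit Types (P Q R : {poly {poly K}}).
Local Notation ev := (horner_alg x).

Definition eval_xy P : A := \sum_(j < size P) ev P`_j * y ^+ j.

Lemma eval_xy_widen n P : (size P <= n)%N -> eval_xy P = \sum_(j < n) ev P`_j * y ^+ j.
Proof.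
move=> hn; rewrite /eval_xy (big_ord_widen _ (fun j => ev P`_j * y ^+ j) hn) big_mkcond.
by apply: eq_bigr => j _; case: ltnP => // hj; rewrite nth_default // rmorph0 mul0r.
Qed.

Lemma eval_xyB P Q : eval_xy (P - Q) = eval_xy P - eval_xy Q.
Proof.
pose n := maxn (size P) (size Q).
have hPQ : (size (P - Q)%R <= n)%N by rewrite (leq_trans (size_polyD _ _)) // size_polyN.
rewrite (eval_xy_widen hPQ) (@eval_xy_widen n P) ?leq_maxl // (@eval_xy_widen n Q) ?leq_maxr //.
by rewrite -sumrB; apply: eq_bigr => j _; rewrite coefB rmorphB mulrBl.
Qed.

Lemma eval_xy0 : eval_xy 0 = 0.
Proof. by rewrite /eval_xy size_poly0 big_ord0. Qed.

Lemma eval_xyN P : eval_xy (- P) = - eval_xy P.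
Proof. by rewrite -sub0r eval_xyB eval_xy0 sub0r. Qed.

Lemma eval_xyD P Q : eval_xy (P + Q) = eval_xy P + eval_xy Q.
Proof. by rewrite -{1}[Q]opprK eval_xyB eval_xyN opprK. Qed.

Lemma eval_xy_sum n (F : 'I_n -> {poly {poly K}}) :
  eval_xy (\sum_(i < n) F i) = \sum_(i < n) eval_xy (F i).
Proof. exact: (big_morph _ eval_xyD eval_xy0). Qed.

Lemma eval_xyCM q R : eval_xy (q%:P * R) = ev q * eval_xy R.
Proof.
rewrite (@eval_xy_widen (size R)) ?mul_polyC ?size_scale_leq // /eval_xy mulr_sumr.
by apply: eq_bigr => j _; rewrite -mul_polyC coefCM rmorphM mulrA.
Qed.

Lemma eval_xyC q : eval_xy q%:P = ev q.
Proof. by rewrite (eval_xy_widen (size_polyC_leq1 q)) big_ord1 coefC /= mulr1. Qed.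

Lemma eval_xy1 : eval_xy 1 = 1.
Proof. by rewrite -polyC1 eval_xyC rmorph1. Qed.

Lemma eval_xyXn j : eval_xy 'X^j = y ^+ j.
Proof.
rewrite /eval_xy size_polyXn big_ord_recr /= coefXn eqxx rmorph1 mul1r big1 ?add0r // => i _.
by rewrite coefXn ltn_eqF // rmorph0 mul0r.
Qed.

Lemma eval_xyXM R : eval_xy ('X * R) = \sum_(j < size R) ev R`_j * y ^+ j.+1.
Proof.
rewrite (@eval_xy_widen (size R).+1); last by rewrite (leq_trans (size_polyMleq _ _)) ?size_polyX.
rewrite big_ord_recl coefXM eqxx rmorph0 mul0r add0r.
by apply: eq_bigr => j _; rewrite coefXM.
Qed.

Variable N : nat.
Hypothesis rel : y * x - x * y = x ^+ N.

Lemma mulyx : y * x = x * y + x ^+ N.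
Proof. by rewrite -rel addrC subrK. Qed.

Lemma mulr_y_horner p : y * ev p = ev p * y + x ^+ N * ev p^`().
Proof.
elim/poly_ind: p => [|p c IH]; first by rewrite deriv0 !rmorph0 !(mulr0, mul0r, addr0).
have xNp : ev p * x ^+ N = x ^+ N * ev p by apply/commrX/horner_alg_comm.
rewrite derivMXaddC !rmorphD !rmorphM /= !horner_algX !horner_algC mulrDr mulrA IH.
rewrite mulrDl -[ev p * y * x]mulrA mulyx mulrDr mulrA xNp.
rewrite !mulrDl !mulrDr !mulrA mulr_algl mulr_algr.
by rewrite -!addrA; congr (_ + _); rewrite addrA addrC.
Qed.

Lemma eval_xy_mulY R : y * eval_xy R = eval_xy (ore_mulY N R).
Proof.
rewrite /ore_mulY eval_xyD eval_xyXM eval_xyCM (eval_xy_widen (size_poly _ _)).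
rewrite rmorphXn /= horner_algX mulr_sumr mulr_sumr -big_split /=.
apply: eq_bigr => j _; rewrite coef_poly ltn_ord [LHS]mulrA mulr_y_horner mulrDl.
by rewrite -[ev _ * y * _]mulrA -exprS mulrA.
Qed.

Lemma eval_xy_mul P Q : eval_xy P * eval_xy Q = eval_xy (ore_mul N P Q).
Proof.
have mulYn j R : y ^+ j * eval_xy R = eval_xy (iter j (ore_mulY N) R).
  by elim: j => [|j IH]; rewrite ?mul1r // exprS -mulrA IH eval_xy_mulY.
rewrite {1}/eval_xy mulr_suml /ore_mul eval_xy_sum.
by apply: eq_bigr => j _; rewrite eval_xyCM -mulYn mulrA.
Qed.

Lemma eval_xy_commYnX j : eval_xy (commYnX K N j) = y ^+ j * x - x * y ^+ j.
Proof.
elim: j => [|j IH]; first by rewrite eval_xy0 mul1r mulr1 subrr.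
rewrite /= eval_xyD -eval_xy_mulY IH eval_xyCM rmorphXn /= horner_algX eval_xyXn -rel.
by rewrite mulrBr mulrBl !mulrA addrA subrK -exprS -mulrA -exprS.
Qed.

Lemma eval_xy_commX P : eval_xy (ore_commX N P) = eval_xy P * x - x * eval_xy P.
Proof.
rewrite /ore_commX eval_xy_sum {2 3}/eval_xy mulr_suml mulr_sumr -sumrB.
by apply: eq_bigr => j _; rewrite eval_xyCM eval_xy_commYnX mulrBr !mulrA horner_alg_comm.
Qed.

End EvalXY.

Section Presentation.
Variables (K : fieldType) (N : nat) (A : algType K) (x y : A).
Hypothesis HA : presents_AN N x y.

Lemma presents_hom_uniq (B : algType K) (g1 g2 : A -> B) :
  is_alg_hom g1 -> is_alg_hom g2 -> g1 x = g2 x -> g1 y = g2 y -> g1 =1 g2.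
Proof.
move=> h1 h2 ex ey.
have r : g1 y * g1 x - g1 x * g1 y = g1 x ^+ N.
  by rewrite -!(alg_homM h1) -(alg_homB h1) HA.1 (alg_homX h1).
have [f [_ _ _ f_uniq]] := HA.2 B _ _ r.
by move=> a; rewrite (f_uniq _ h1) // (f_uniq _ h2).
Qed.

Section Lift.
Variables (B : algType K) (a b : B).
Hypothesis rel_ab : b * a - a * b = a ^+ N.

Lemma presents_hom_exists : exists f : A -> B, [/\ is_alg_hom f, f x = a & f y = b].
Proof. by have [f [hf fx fy _]] := HA.2 B a b rel_ab; exists f. Qed.

Definition lift_hom : A -> B :=
  proj1_sig (constructive_indefinite_description _ presents_hom_exists).

Lemma lift_homP : [/\ is_alg_hom lift_hom, lift_hom x = a & lift_hom y = b].
Proof. exact: (proj2_sig (constructive_indefinite_description _ presents_hom_exists)). Qed.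

Lemma lift_hom_is_alg_hom : is_alg_hom lift_hom. Proof. by case: lift_homP. Qed.
Lemma lift_hom_x : lift_hom x = a. Proof. by case: lift_homP. Qed.
Lemma lift_hom_y : lift_hom y = b. Proof. by case: lift_homP. Qed.

End Lift.

Let rel : y * x - x * y = x ^+ N := HA.1.

Definition eval_xy_range : {pred A} :=
  fun a => excluded_middle_informative (exists P, eval_xy x y P = a).

Lemma eval_xy_rangeP a : reflect (exists P, eval_xy x y P = a) (a \in eval_xy_range).
Proof. exact: sumboolP. Qed.

Lemma eval_xy_range_subalg_closed : GRing.subsemialg_closed eval_xy_range.
Proof.
split; first by apply/eval_xy_rangeP; exists 1; rewrite eval_xy1.
- split=> [|a b /eval_xy_rangeP[P <-] /eval_xy_rangeP[Q <-]]; apply/eval_xy_rangeP.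
    by exists 0; rewrite eval_xy0.
  by exists (P + Q); rewrite eval_xyD.
- move=> c a /eval_xy_rangeP[P <-]; apply/eval_xy_rangeP; exists ((c%:P)%:P * P).
  by rewrite eval_xyCM horner_algC mulr_algl.
- move=> a b /eval_xy_rangeP[P <-] /eval_xy_rangeP[Q <-]; apply/eval_xy_rangeP.
  by exists (ore_mul N P Q); rewrite (eval_xy_mul rel).
Qed.

HB.instance Definition _ :=
  GRing.isSubalgClosed.Build K A eval_xy_range eval_xy_range_subalg_closed.
Record eval_xy_subalg := EvalXYSubalg { eval_xy_val : A; _ : eval_xy_val \in eval_xy_range }.
HB.instance Definition _ := [isSub for eval_xy_val].
HB.instance Definition _ := [Choice of eval_xy_subalg by <:].
HB.instance Definition _ := [SubChoice_isSubAlgebra of eval_xy_subalg by <:].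

(* The range of [eval_xy] is a subalgebra containing [x] and [y], so the universal
   property retracts [A] onto it. *)
Lemma eval_xy_surj a : exists P, eval_xy x y P = a.
Proof.
have hx : x \in eval_xy_range by apply/eval_xy_rangeP; exists ('X%:P); rewrite eval_xyC horner_algX.
have hy : y \in eval_xy_range by apply/eval_xy_rangeP; exists 'X; rewrite (eval_xyXn x y 1).
pose x' : eval_xy_subalg := EvalXYSubalg hx.
pose y' : eval_xy_subalg := EvalXYSubalg hy.
have r : y' * x' - x' * y' = x' ^+ N by apply: val_inj; rewrite rmorphB !rmorphM rmorphXn.
have [f [hf fx fy _]] := HA.2 _ _ _ r.
have hval : is_alg_hom (val : eval_xy_subalg -> A).
  split=> [u v|]; first exact: rmorphD.
  split=> [u v|]; first exact: rmorphM.
  by split=> [|c u]; [exact: rmorph1 | exact: linearZ].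
have fK : val \o f =1 id.
  by apply: presents_hom_uniq (alg_hom_comp hf hval) (@alg_hom_id _ A) _ _; rewrite /= ?fx ?fy.
by apply/eval_xy_rangeP; rewrite -(fK a); exact: valP.
Qed.

End Presentation.

(* A faithful representation of [K[x]]: [x] acts as the shift [S] on [K^(m+1)] and
   [y] as [- D S^(N-1)], where [D = diag(0, 1, ..., m)] satisfies [S D - D S = S]. *)
Section ShiftRepresentation.
Variables (K : fieldType) (N m : nat).
Hypothesis HN : (0 < N)%N.

Definition shift_mx : 'M[K]_m.+1 := \matrix_(i, j) (j == i.+1 :> nat)%:R.
Definition weight_mx : 'M[K]_m.+1 := diag_mx (\row_(i < m.+1) i%:R).

Lemma shift_weight_comm : shift_mx * weight_mx - weight_mx * shift_mx = shift_mx.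
Proof.
apply/matrixP => i j; rewrite -!mulmxE mul_mx_diag mul_diag_mx !mxE.
case: eqP => [->|_]; last by rewrite mul0r mulr0 subr0.
by rewrite mul1r mulr1 -addn1 natrD addrAC subrr add0r.
Qed.

Lemma shift_rel : (- (weight_mx * shift_mx ^+ N.-1)) * shift_mx -
    shift_mx * (- (weight_mx * shift_mx ^+ N.-1)) = shift_mx ^+ N.
Proof.
rewrite mulNr mulrN opprK addrC.
have -> : weight_mx * shift_mx ^+ N.-1 * shift_mx = weight_mx * shift_mx * shift_mx ^+ N.-1.
  by rewrite -!mulrA -exprSr exprS.
by rewrite mulrA -mulrBl shift_weight_comm -exprS prednK.
Qed.

Lemma horner_shift_mx p (j : 'I_m.+1) : horner_alg shift_mx p 0 j = p`_j.
Proof.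
elim/poly_ind: p j => [|p c IH] j; first by rewrite rmorph0 mxE coef0.
rewrite rmorphD rmorphM /= horner_algX horner_algC !mxE coefD coefMX coefC.
under eq_bigr => k _ do rewrite IH mxE.
case: j => [[|j] hj] /=; first by rewrite big1 ?add0r ?mulr1 // => k _; rewrite mulr0.
rewrite (bigD1 (Ordinal (ltnW hj))) //= eqxx mulr1 big1 ?addr0 ?mulr0 ?addr0 // => k hk.
by rewrite eqSS; case: eqP => [e|_]; [case/eqP: hk; apply: val_inj | rewrite mulr0].
Qed.

End ShiftRepresentation.

Section NormalForm.
Variables (K : fieldType) (N : nat) (A : algType K) (x y : A).
Hypothesis HA : presents_AN N x y.
Hypothesis HN : (0 < N)%N.

Let rel : y * x - x * y = x ^+ N := HA.1.
Local Notation ev := (horner_alg x).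
Local Notation eval_xy := (eval_xy x y).

Lemma horner_x_eq0 p : ev p = 0 -> p = 0.
Proof.
move=> p0; have [f [hf fx _ _]] := HA.2 _ _ _ (@shift_rel K N (size p) HN).
have := alg_hom_horner hf x p; rewrite p0 (alg_hom0 hf) fx => /esym pS0.
apply/polyP => i; rewrite coef0; case: (ltnP i (size p).+1) => hi.
  by rewrite -(horner_shift_mx _ (Ordinal hi)) pS0 mxE.
by rewrite nth_default // ltnW.
Qed.

Lemma horner_x_inj : injective ev.
Proof.
move=> p q e; apply/eqP; rewrite -subr_eq0; apply/eqP/horner_x_eq0.
by rewrite rmorphB /= e subrr.
Qed.

Lemma x_neq0 : x != 0.
Proof.
apply/eqP => x0; suff /eqP : 'X = 0 :> {poly K} by rewrite polyX_eq0.
by apply: horner_x_eq0; rewrite horner_algX.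
Qed.

Lemma presents_oner_neq0 : (1 : A) != 0.
Proof.
apply/eqP => o0; suff /eqP : 1 = 0 :> {poly K} by rewrite oner_eq0.
by apply: horner_x_eq0; rewrite rmorph1.
Qed.

Hypothesis charK0 : [pchar K] =i pred0.

(* Commuting with [x] strictly lowers the [Y]-degree of a normal form of [Y]-degree > 0. *)
Lemma eval_xy_eq0 P : eval_xy P = 0 -> P = 0.
Proof.
elim: (size P) {-2}P (leqnn (size P)) => [|n IH] Q hQ Q0.
  by apply/eqP; rewrite -size_poly_eq0 -leqn0.
have [hs|hs] := ltnP 1 (size Q); last first.
  by move: Q0; rewrite (size1_polyC hs) eval_xyC => /horner_x_eq0 ->.
have hC : eval_xy (ore_commX N Q) = 0 by rewrite (eval_xy_commX rel) Q0 mul0r mulr0 subrr.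
have := ore_commX_neq0 N charK0 hs; rewrite (IH _ _ hC) ?eqxx //.
by apply: leq_trans (size_ore_commX _ _) _; rewrite -ltnS prednK // (leq_trans _ hs).
Qed.

Lemma eval_xy_inj : injective eval_xy.
Proof.
move=> P Q e; apply/eqP; rewrite -subr_eq0; apply/eqP/eval_xy_eq0.
by rewrite eval_xyB e subrr.
Qed.

Lemma commr_x_horner b : b * x = x * b -> exists q, b = ev q.
Proof.
have [P <-] := eval_xy_surj HA b; move=> bx.
have [hs|hs] := ltnP 1 (size P); last by exists P`_0; rewrite {1}(size1_polyC hs) eval_xyC.
have : eval_xy (ore_commX N P) = 0 by rewrite (eval_xy_commX rel) bx subrr.
by move/eval_xy_eq0/eqP; rewrite (negbTE (ore_commX_neq0 N charK0 hs)).
Qed.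

Lemma lreg_xN : GRing.lreg (x ^+ N).
Proof.
have XN0 : ('X^N : {poly K}) != 0 by rewrite monic_neq0 ?monicXn.
move=> a b e; have [P hP] := eval_xy_surj HA (a - b).
have : eval_xy (('X^N)%:P * P) = 0.
  by rewrite eval_xyCM hP rmorphXn /= horner_algX mulrBr e subrr.
move/eval_xy_eq0/eqP; rewrite mulf_eq0 polyC_eq0 (negbTE XN0) /= => /eqP P0.
by apply/eqP; rewrite -subr_eq0 -hP P0 eval_xy0.
Qed.

(* [A / x^N A] is commutative: modulo [X^N] the product [ore_mul] is the commutative one. *)
Lemma commutator_in_xN a b : exists r, a * b - b * a = x ^+ N * r.
Proof.
have [P <-] := eval_xy_surj HA a; have [Q <-] := eval_xy_surj HA b.
have [R1 hR1] := ore_mul_modXN N P Q; have [R2 hR2] := ore_mul_modXN N Q P.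
exists (eval_xy (R1 - R2)).
rewrite !(eval_xy_mul rel) hR1 hR2 mulrC -eval_xyB.
by rewrite (_ : _ - _ = ('X^N)%:P * (R1 - R2)) ?eval_xyCM ?rmorphXn /= ?horner_algX //; ring.
Qed.

(* The leading [Y]-coefficient of a product is the product of the leading ones. *)
Lemma unit_is_scalar (a b : A) : a * b = 1 -> exists c : K, a = c%:A.
Proof.
have [P <-] := eval_xy_surj HA a; have [Q <-] := eval_xy_surj HA b; move=> PQ1.
have nz1 : (0 : A) <> 1 by apply/eqP; rewrite eq_sym presents_oner_neq0.
have hP : P != 0 by apply/eqP => P0; apply: nz1; rewrite -PQ1 P0 eval_xy0 mul0r.
have hQ : Q != 0 by apply/eqP => Q0; apply: nz1; rewrite -PQ1 Q0 eval_xy0 mulr0.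
have e : ore_mul N P Q = 1 by apply: eval_xy_inj; rewrite -(eval_xy_mul rel) PQ1 eval_xy1.
have [s l] := ore_mul_lead N hP hQ; rewrite e size_poly1 lead_coef1 in s l.
have [sP sQ] : size P = 1%N /\ size Q = 1%N.
  by rewrite -!size_poly_gt0 in hP hQ; split; lia.
rewrite (size1_polyC (eq_leq sP)) (size1_polyC (eq_leq sQ)) !lead_coefC in l.
have /eqP : size (P`_0 * Q`_0) = 1%N by rewrite -l size_poly1.
rewrite size_mul_eq1 => /andP[/eqP /eq_leq /size1_polyC P00 _].
by exists (P`_0)`_0; rewrite {1}(size1_polyC (eq_leq sP)) eval_xyC {1}P00 horner_algC.
Qed.

Lemma eval_xy_expn P k : P != 0 ->
  exists R, eval_xy P ^+ k = eval_xy R /\ size R = (k * (size P).-1).+1.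
Proof.
move=> P0; elim: k => [|k [R [eR sR]]]; first by exists 1; rewrite eval_xy1 size_poly1.
have R0 : R != 0 by rewrite -size_poly_gt0 sR.
exists (ore_mul N P R); rewrite exprS eR (eval_xy_mul rel); split=> //.
have [-> _] := ore_mul_lead N P0 R0; rewrite sR mulSn.
by move: P0; rewrite -size_poly_gt0; case: (size P) => [|s] //= _; lia.
Qed.

Lemma xN_neq0 : x ^+ N != 0.
Proof.
apply/eqP => xN0; move/eqP: presents_oner_neq0; apply.
by apply: lreg_xN; rewrite mulr1 mulr0.
Qed.

(* Comparing [Y]-degrees puts [a] in [K[x]], where [expn_eq_scaleXn] applies. *)
Lemma expn_eq_scale_xN (a : A) (c : K) : c != 0 -> a ^+ N = c *: x ^+ N ->
  exists d : K, a = d *: x.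
Proof.
have [P <-] := eval_xy_surj HA a; move=> c0 e.
have P0 : P != 0.
  apply/eqP => P0; move: e; rewrite P0 eval_xy0 expr0n gtn_eqF // => /esym/eqP.
  by rewrite scaler_eq0 (negbTE c0) (negbTE xN_neq0).
have [R [eR sR]] := eval_xy_expn N P0.
have eC : c *: x ^+ N = eval_xy (c *: 'X^N)%:P by rewrite eval_xyC horner_alg_scaleXn.
have PN : R = (c *: 'X^N)%:P by apply: eval_xy_inj; rewrite -eR -eC.
have P1 : (size P <= 1)%N.
  have : (size R <= 1)%N by rewrite PN size_polyC_leq1.
  by rewrite sR ltnS leqn0 muln_eq0 (gtn_eqF HN) /=; case: (size P) => [|[|]].
rewrite (size1_polyC P1) eval_xyC in e *.
move: e; rewrite -rmorphXn -horner_alg_scaleXn => /horner_x_inj.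
case/(expn_eq_scaleXn HN c0) => d ->; exists d.
by rewrite (alg_homZ (horner_alg_is_alg_hom x)) horner_algX.
Qed.

Lemma alg_hom_xN (f : A -> A) : is_alg_hom f -> exists r, f x ^+ N = x ^+ N * r.
Proof.
move=> hf; have [r hr] := commutator_in_xN (f y) (f x); exists r.
by rewrite -(alg_homX hf) -{1}rel (alg_homB hf) !(alg_homM hf) hr.
Qed.

(* [f] and its inverse both map [x^N] into [x^N A], so [f(x)^N = x^N u] with [u] a unit. *)
Lemma alg_aut_x (f : A -> A) : is_alg_aut f -> exists2 d : K, d != 0 & f x = d *: x.
Proof.
case=> hf [g fK gK]; have hg := alg_hom_can hf fK gK.
have [r hr] := alg_hom_xN hf; have [s hs] := alg_hom_xN hg.
have rs1 : r * f s = 1.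
  apply: lreg_xN; rewrite mulr1 mulrA -hr -(alg_homX hf) -(alg_homM hf) -hs.
  by rewrite (alg_homX hf) gK.
have [c rc] := unit_is_scalar rs1.
have c0 : c != 0.
  by apply: contra_eq_neq rs1 => c0; rewrite rc c0 scale0r mul0r eq_sym presents_oner_neq0.
rewrite rc mulr_algr in hr; have [d fx] := expn_eq_scale_xN c0 hr.
exists d => //; apply/eqP => d0; move: fx; rewrite d0 scale0r => /(congr1 g).
by rewrite fK (alg_hom0 hg); apply/eqP/x_neq0.
Qed.

(* [f y - d^(N-1) y] commutes with [x]. *)
Lemma alg_aut_y (f : A -> A) (d : K) : is_alg_hom f -> d != 0 -> f x = d *: x ->
  exists q, f y = d ^+ N.-1 *: y + ev q.
Proof.
move=> hf d0 fx.
have comm_fy : f y * x - x * f y = d ^+ N.-1 *: (y * x - x * y).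
  have := congr1 f rel; rewrite (alg_homB hf) !(alg_homM hf) (alg_homX hf) fx.
  rewrite -scalerAr -scalerAl -scalerBr exprZn rel => e.
  by apply: (scalerI d0); rewrite e scalerA -exprS prednK.
have [q hq] : exists q, f y - d ^+ N.-1 *: y = ev q.
  apply: commr_x_horner; rewrite mulrBl mulrBr -scalerAl -scalerAr.
  move/eqP: comm_fy; rewrite scalerBr subr_eq => /eqP ->.
  by rewrite addrAC [_ - _ - _]addrAC subrr add0r addrC.
by exists q; rewrite -hq addrC subrK.
Qed.

End NormalForm.

(** * Automorphisms and the center *)

Section Automorphisms.
Variables (K : fieldType) (N : nat) (A : algType K) (x y : A).
Hypothesis HA : presents_AN N x y.
Hypothesis HN : (0 < N)%N.

Let rel : y * x - x * y = x ^+ N := HA.1.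
Local Notation ev := (horner_alg x).
Local Notation lift_hom := (lift_hom HA).

Lemma tau_rel q : (y + ev q) * x - x * (y + ev q) = x ^+ N.
Proof. by rewrite mulrDl mulrDr horner_alg_comm (addrC (x * y)) addrKA. Qed.

Definition tau q : A -> A := lift_hom (tau_rel q).

Lemma tau_is_alg_hom q : is_alg_hom (tau q). Proof. exact: lift_hom_is_alg_hom. Qed.
Lemma tau_x q : tau q x = x. Proof. exact: lift_hom_x. Qed.
Lemma tau_y q : tau q y = y + ev q. Proof. exact: lift_hom_y. Qed.

Lemma tau_horner q p : tau q (ev p) = ev p.
Proof. by rewrite (alg_hom_horner (tau_is_alg_hom q)) tau_x. Qed.

Lemma tauD p q : tau (p + q) =1 tau p \o tau q.
Proof.
apply: (presents_hom_uniq HA (tau_is_alg_hom _)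
  (alg_hom_comp (tau_is_alg_hom q) (tau_is_alg_hom p))); first by rewrite /= !tau_x.
by rewrite /= !tau_y (alg_homD (tau_is_alg_hom p)) tau_y tau_horner rmorphD addrA.
Qed.

Lemma tau0 : tau 0 =1 id.
Proof.
apply: (presents_hom_uniq HA (tau_is_alg_hom _) (alg_hom_id _)); first exact: tau_x.
by rewrite tau_y rmorph0 addr0.
Qed.

Lemma tau_is_alg_aut q : is_alg_aut (tau q).
Proof.
split; first exact: tau_is_alg_hom.
by exists (tau (- q)) => a; rewrite -[LHS]/((_ \o _) a) -tauD ?addNr ?addrN tau0.
Qed.

Lemma theta_rel (l : K) :
  (l ^+ N.-1 *: y) * (l *: x) - (l *: x) * (l ^+ N.-1 *: y) = (l *: x) ^+ N.
Proof.
rewrite -!scalerAl -!scalerAr !scalerA (mulrC l) -scalerBr rel exprZn.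
by rewrite -exprSr prednK.
Qed.

Definition theta l : A -> A := lift_hom (theta_rel l).

Lemma theta_is_alg_hom l : is_alg_hom (theta l). Proof. exact: lift_hom_is_alg_hom. Qed.
Lemma theta_x l : theta l x = l *: x. Proof. exact: lift_hom_x. Qed.
Lemma theta_y l : theta l y = l ^+ N.-1 *: y. Proof. exact: lift_hom_y. Qed.

Lemma thetaK l : l != 0 -> cancel (theta l) (theta l^-1).
Proof.
move=> l0 a; have hl := theta_is_alg_hom l; have hl' := theta_is_alg_hom l^-1.
apply: (presents_hom_uniq HA (alg_hom_comp hl hl') (alg_hom_id _)) => /=.
  by rewrite theta_x (alg_homZ hl') theta_x scalerA mulfV // scale1r.
by rewrite theta_y (alg_homZ hl') theta_y scalerA -exprMn mulfV // expr1n scale1r.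
Qed.

Lemma theta_is_alg_aut l : l != 0 -> is_alg_aut (theta l).
Proof.
move=> l0; split; first exact: theta_is_alg_hom.
by exists (theta l^-1); [exact: thetaK | rewrite -{2}(invrK l); apply: thetaK; rewrite invr_eq0].
Qed.

End Automorphisms.

Section Center.
Variables (K : fieldType) (N : nat) (A : algType K) (x y : A).
Hypothesis HA : presents_AN N x y.
Hypothesis HN : (0 < N)%N.
Hypothesis charK0 : [pchar K] =i pred0.

Local Notation ev := (horner_alg x).
Local Notation tau := (tau HA).
Local Notation theta := (theta HA HN).

Definition sigma (t : K) : A -> A := tau (t *: 'X^(N.-1)).

Lemma sigma_x t : sigma t x = x. Proof. exact: tau_x. Qed.

Lemma sigma_y t : sigma t y = y + t *: x ^+ N.-1.
Proof. by rewrite /sigma tau_y horner_alg_scaleXn. Qed.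

Lemma sigma_is_alg_aut t : is_alg_aut (sigma t). Proof. exact: tau_is_alg_aut. Qed.

Lemma sigma0 : sigma 0 =1 id. Proof. by rewrite /sigma scale0r; exact: tau0. Qed.

Lemma sigmaD s t : sigma (s + t) =1 sigma s \o sigma t.
Proof. by rewrite /sigma scalerDl; exact: tauD. Qed.

Lemma sigma_uniq t (s : A -> A) : is_alg_hom s -> s x = x ->
  s y = y + t *: x ^+ N.-1 -> s =1 sigma t.
Proof.
move=> hs sx sy; apply: (presents_hom_uniq HA hs (sigma_is_alg_aut t).1).
  by rewrite sx sigma_x.
by rewrite sy sigma_y.
Qed.

Lemma sigma_inj s t : sigma s =1 sigma t -> s = t.
Proof.
move=> /(_ y); rewrite !sigma_y => /addrI.
rewrite -(horner_alg_scaleXn x s) -(horner_alg_scaleXn x t) => /(horner_x_inj HA HN).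
by move/(congr1 (fun p : {poly K} => p`_N.-1)); rewrite !coefZ coefXn eqxx !mulr1.
Qed.

(* By [alg_aut_x] and [alg_aut_y], [f] is [x |-> d x, y |-> d^(N-1) y + q(x)];
   both composites send [y] to [d^(N-1) (y + t x^(N-1)) + q(x)]. *)
Lemma sigma_central t f : is_alg_aut f -> sigma t \o f =1 f \o sigma t.
Proof.
move=> hf; have [d d0 fx] := alg_aut_x HA HN charK0 hf.
have [q fy] := alg_aut_y HA HN charK0 hf.1 d0 fx.
have hs := (sigma_is_alg_aut t).1; have hf1 := hf.1.
apply: (presents_hom_uniq HA (alg_hom_comp hf1 hs) (alg_hom_comp hs hf1)) => /=.
  by rewrite sigma_x fx (alg_homZ hs) sigma_x.
rewrite fy sigma_y (alg_homD hf1) (alg_homZ hf1) (alg_homX hf1) fx fy.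
rewrite (alg_homD hs) (alg_homZ hs) sigma_y (alg_hom_horner hs) sigma_x.
by rewrite exprZn scalerDr !scalerA mulrC addrAC.
Qed.

Section CentralAut.
Variable g : A -> A.
Hypotheses (hg : is_alg_aut g) (g_central : forall f, is_alg_aut f -> g \o f =1 f \o g).

(* Write [g x = a x], [g y = k y + p(x)]. Commuting with [tau q] at [y] forces
   [q(a x) = k q(x)]; [q = 1] and [q = X] then give [k = 1] and [a = 1]. *)
Lemma central_aut_shape : g x = x /\ exists p, g y = y + ev p.
Proof.
have [a a0 gx] := alg_aut_x HA HN charK0 hg; have [p gy] := alg_aut_y HA HN charK0 hg.1 a0 gx.
set k := a ^+ N.-1 in gy; have hg1 := hg.1.
have comm_tau q : horner_alg (a *: x) q = k *: ev q.
  have := g_central (tau_is_alg_aut HA q) y.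
  rewrite /= tau_y (alg_homD hg1) gy (alg_hom_horner hg1) gx.
  rewrite (alg_homD (tau_is_alg_hom HA q)) (alg_homZ (tau_is_alg_hom HA q)) tau_y tau_horner.
  by rewrite scalerDr [RHS]addrAC -!addrA => /addrI /addrI.
have k1 : k = 1.
  move: (comm_tau 1); rewrite !rmorph1 -{1}(scale1r 1) => /eqP; rewrite -subr_eq0 -scalerBl.
  by rewrite scaler_eq0 (negbTE (presents_oner_neq0 HA HN)) orbF subr_eq0 => /eqP.
have a1 : a = 1.
  move: (comm_tau 'X); rewrite !horner_algX k1 scale1r -{2}(scale1r x) => /eqP.
  by rewrite -subr_eq0 -scalerBl scaler_eq0 (negbTE (x_neq0 HA HN)) orbF subr_eq0 => /eqP.
by split; [rewrite gx a1 scale1r | exists p; rewrite gy k1 scale1r].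
Qed.

(* Commuting with [theta 2] makes [p] homogeneous of degree [N - 1]. *)
Lemma central_aut_sigma : exists t, g =1 sigma t.
Proof.
have [gx [p gy]] := central_aut_shape; have hg1 := hg.1.
have two0 : (2 : K) != 0 by rewrite (pcharf0P _).1.
have hth := theta_is_alg_hom HA HN 2.
have e := g_central (theta_is_alg_aut HA HN two0) y.
rewrite /= theta_y (alg_homZ hg1) gy (alg_homD hth) theta_y (alg_hom_horner hth) theta_x in e.
have p2 : horner_alg (2 *: 'X) p = 2 ^+ N.-1 *: p.
  apply: (horner_x_inj HA HN); rewrite (alg_hom_horner (horner_alg_is_alg_hom x)).
  rewrite !(alg_homZ (horner_alg_is_alg_hom x)) horner_algX.
  by move: e; rewrite scalerDr => /addrI ->.
exists p`_N.-1; apply: sigma_uniq => //; rewrite gy.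
by rewrite {1}(horner_scale2X_homog charK0 p2) horner_alg_scaleXn.
Qed.

End CentralAut.

End Center.

Theorem corollary2p5 (K : fieldType) (charK0 : [pchar K] =i pred0)
  (N : nat) (HN : (0 < N)%N) (A : algType K) (x y : A)
  (HA : presents_AN N x y) :
  exists sigma : K -> A -> A,
    (* sigma_t is an automorphism with the prescribed values, and is unique *)
    (forall t : K, [/\ is_alg_aut (sigma t), sigma t x = x &
                      sigma t y = y + t *: x ^+ (N - 1)]) /\
    (forall (t : K) (s : A -> A), is_alg_aut s -> s x = x ->
        s y = y + t *: x ^+ (N - 1) -> s =1 sigma t) /\
    (* sigma_t is central in Aut(A) *)
    (forall (t : K) (f : A -> A), is_alg_aut f ->
        sigma t \o f =1 f \o sigma t) /\
    (* t |-> sigma_t is a group homomorphism (K,+) -> Aut(A) *)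
    sigma 0 =1 id /\
    (forall s t : K, sigma (s + t) =1 sigma s \o sigma t) /\
    (* it is injective *)
    (forall s t : K, sigma s =1 sigma t -> s = t) /\
    (* its image is the whole center of Aut(A) *)
    (forall g : A -> A, is_alg_aut g ->
        (forall f : A -> A, is_alg_aut f -> g \o f =1 f \o g) ->
        exists t : K, g =1 sigma t).
Proof.
exists (sigma HA); rewrite subn1.
split=> [t|]; first by split; [exact: sigma_is_alg_aut | exact: sigma_x | exact: sigma_y].
split=> [t s hs|]; first exact: sigma_uniq hs.1.
split=> [t f|]; first exact: sigma_central.
split; first exact: sigma0.
split=> [s t|]; first exact: sigmaD.
split=> [s t|g hg hc]; first exact: sigma_inj.
exact: central_aut_sigma hc.
Qed.
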